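(* Let $d\ge 3$. (a) The subKautz digraph $sK(d,2)$ is antipodal and has mean distance $\overline{\partial^*}=\dfrac{2d^2+3d-1}{d^2+d}$. (b) The cyclic Kautz digraph $CK(d,3)$ has mean distance $\overline{\partial}=\dfrac{3d^3+d^2-5d-2}{d^3-d}$.
   Context: SubKautz digraph $sK(d,2)$: vertices $x_1x_2$ with $x_1\neq x_2$ in $\mathbb Z_{d+1}$; arcs $x_1x_2\to x_2x_3$ for $x_3\neq x_1,x_2$. Cyclic Kautz digraph $CK(d,3)$: vertices $x_1x_2x_3\in\mathbb Z_{d+1}^3$ with $x_1,x_2,x_3$ pairwise distinct; arcs $x_1x_2x_3\to x_2x_3y$ for $y\neq x_2,x_3$. The mean distance of a digraph $G$ on $N$ vertices is $\frac{1}{N^2}\sum_{u,v\in V(G)}\mathrm{dist}(u,v)$ (pairs with $u=v$ included, contributing $0$); for a vertex-transitive digraph this equals $\frac1N\sum_{v}\mathrm{dist}(u,v)$ for any fixed $u$. A digraph is antipodal if every vertex $u$ has exactly one vertex $v$ at distance equal to the diameter from $u$, and simultaneously $u$ is at distance equal to the diameter from $v$. *)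

From mathcomp Require Import all_boot all_order all_algebra.
Set Implicit Arguments. Unset Strict Implicit. Unset Printing Implicit Defensive.

Fixpoint walk (T : finType) (e : rel T) (k : nat) (u v : T) : bool :=
  if k is k'.+1 then [exists w, e u w && walk e k' w v] else u == v.

(* A shortest walk,
   when one exists, has length < #|T|; if v is unreachable from u the value
   is #|T| (a convention, irrelevant for strongly connected digraphs). *)
Definition dist (T : finType) (e : rel T) (u v : T) : nat :=
  find (fun k => walk e k u v) (iota 0 #|T|).

Definition diameter (T : finType) (e : rel T) : nat :=
  \max_(u : T) \max_(v : T) dist e u v.

Definition mean_distance (T : finType) (e : rel T) : rat :=
  (\sum_(u : T) \sum_(v : T) dist e u v)%:R / (#|T| ^ 2)%:R.

Definition antipodal (T : finType) (e : rel T) : Prop :=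
  forall u : T,
    #|[set v | dist e u v == diameter e]| = 1 /\
    (forall v, dist e u v = diameter e -> dist e v u = diameter e).

Definition sK2_vert (d : nat) :=
  {p : 'I_d.+1 * 'I_d.+1 | p.1 != p.2}.

Definition sK2_arc (d : nat) : rel (sK2_vert d) :=
  fun u v => let: (x1, x2) := val u in let: (y2, x3) := val v in
    (y2 == x2) && (x3 != x1) && (x3 != x2).

Definition CK3_vert (d : nat) :=
  {p : 'I_d.+1 * 'I_d.+1 * 'I_d.+1 |
     [&& p.1.1 != p.1.2, p.1.1 != p.2 & p.1.2 != p.2]}.

Definition CK3_arc (d : nat) : rel (CK3_vert d) :=
  fun u v => let: (x1, x2, x3) := val u in let: (y2, y3, y) := val v in
    [&& y2 == x2, y3 == x3, y != x2 & y != x3].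

From mathcomp Require Import all_boot all_algebra zify ring.

(* In both digraphs the distance from u to v depends only on which letters of v
   coincide with which letters of u, and is given by an explicit table.  The
   table is certified to be the distance by a potential argument: it vanishes
   only at the target, drops by at most one along an arc, and every positive
   value decreases by one along some arc (finding that arc needs a letter
   distinct from three given ones, hence d >= 3).  Summing the table over all
   vertices reduces, through a pointwise identity between indicator functions,
   to counting tuples of distinct letters with prescribed coordinates.  In
   sK(d,2) the only vertex at distance 4 from ab is ba, whence antipodality. *)

Set Implicit Arguments.
Unset Strict Implicit.
Unset Printing Implicit Defensive.

Import GRing.Theory Num.Theory.

Section DistancePotential.

Variables (T : finType) (e : rel T) (f : T -> nat) (v : T).
Hypothesis f_target : f v = 0.
Hypothesis f_arc : forall u w, e u w -> f u <= (f w).+1.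
Hypothesis f_eq0 : forall u, f u = 0 -> u = v.
Hypothesis f_descent : forall u k, f u = k.+1 -> exists2 w, e u w & f w = k.
Hypothesis f_small : forall u, f u < #|T|.

Lemma potential_le_walk k u : walk e k u v -> f u <= k.
Proof.
elim: k u => [|k IHk] u /=; first by move/eqP->; rewrite f_target.
case/existsP=> w /andP[euw wv]; apply: leq_trans (f_arc euw) _.
by rewrite ltnS IHk.
Qed.

Lemma walk_potential k u : f u = k -> walk e k u v.
Proof.
elim: k u => [|k IHk] u /= fu; first by rewrite (f_eq0 fu).
have [w euw fw] := f_descent fu; apply/existsP; exists w.
by rewrite euw IHk.
Qed.

Lemma dist_potential u : dist e u v = f u.
Proof.
rewrite /dist -(subnKC (ltnW (f_small u))) iotaD find_cat size_iota.
have -> : has (fun k => walk e k u v) (iota 0 (f u)) = false.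
  apply/hasPn => k; rewrite mem_iota add0n => /andP[_ ltk].
  by apply/negP => /potential_le_walk; rewrite leqNgt ltk.
move: (f_small u); rewrite -subn_gt0; case: (#|T| - f u) => // n _ /=.
by rewrite walk_potential ?addn0.
Qed.

End DistancePotential.

Lemma sum_sig (I : finType) (P : pred I) (F : I -> nat) :
  \sum_(x : {x | P x}) F (val x) = \sum_(i | P i) F i.
Proof.
rewrite (reindex_omap (val : {x | P x} -> I) insub); last first.
  by move=> i Pi; rewrite insubT.
by apply: eq_bigl => -[i Pi] /=; rewrite insubT ?Pi /= eqxx.
Qed.

Lemma mean_distance_row_sum (T : finType) (e : rel T) (S N : nat) :
  (forall u, \sum_v dist e u v = S) -> #|T| = N -> 0 < N ->
  mean_distance e = (S%:R / N%:R)%R.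
Proof.
move=> rowS cardT N_gt0; rewrite /mean_distance (eq_bigr (fun _ => S)) // sum_nat_const.
have N_neq0 : (N%:R : rat) != 0%R by rewrite pnatr_eq0 -lt0n.
by rewrite cardT natrM natrX; field.
Qed.

Lemma fresh_of_3 (T : finType) (x y z : T) : 3 < #|T| ->
  exists w, [&& w != x, w != y & w != z].
Proof.
move=> T_gt3; have /subsetPn[w _] : ~~ ([set: T] \subset [set x; y; z]).
  apply: contraTN T_gt3 => /subset_leq_card; rewrite cardsT -leqNgt => leT.
  by apply: leq_trans leT _; rewrite !cardsU !cards1; lia.
by rewrite !inE !negb_or => /andP[/andP[wx wy] wz]; exists w; rewrite wx wy wz.
Qed.

Section DistinctTuples.

Variable T : finType.
Local Notation n := #|T|.

Lemma sum_delta (k : T) (F : T -> nat) : \sum_x (x == k) * F x = F k.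
Proof. by rewrite (bigD1 k) //= eqxx mul1n big1 ?addn0 // => x /negbTE->. Qed.

Lemma sum_eq1 (k : T) : \sum_x (x == k : nat) = 1.
Proof. by rewrite -[RHS](sum_delta k (fun _ => 1)); apply: eq_bigr => x _; rewrite muln1. Qed.

Lemma sum_neq (k : T) : \sum_x (k != x : nat) = n.-1.
Proof.
have : \sum_x ((k != x) + (x == k)) = n.
  by rewrite -sum1_card; apply: eq_bigr => x _; rewrite eq_sym; case: eqP.
by rewrite big_split /= sum_eq1; lia.
Qed.

Lemma sum_neq2 (k l : T) : k != l -> \sum_x ((k != x) * (l != x)) = n.-2.
Proof.
move=> kl; have : \sum_x ((k != x) * (l != x) + (x == l)) = n.-1.
  rewrite -(sum_neq k); apply: eq_bigr => x _.
  by have [<-|_] := eqVneq l x; rewrite ?kl ?muln1 ?addn0.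
by rewrite big_split /= sum_eq1; lia.
Qed.

Definition dsum2 (F : T -> T -> nat) := \sum_x \sum_y (x != y) * F x y.

Definition dsum3 (F : T -> T -> T -> nat) :=
  \sum_x \sum_y \sum_z (x != y) * ((x != z) * (y != z)) * F x y z.

Lemma eq_dsum2 F G : (forall x y, x != y -> F x y = G x y) -> dsum2 F = dsum2 G.
Proof.
move=> FG; apply: eq_bigr => x _; apply: eq_bigr => y _.
by case: (boolP (x != y)) => xy; rewrite ?mul0n // FG.
Qed.

Lemma dsum2D F G : dsum2 (fun x y => F x y + G x y) = dsum2 F + dsum2 G.
Proof.
rewrite /dsum2 -big_split; apply: eq_bigr => x _; rewrite -big_split.
by apply: eq_bigr => y _; rewrite mulnDr.
Qed.

Lemma dsum2Ml k F : dsum2 (fun x y => k * F x y) = k * dsum2 F.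
Proof.
rewrite /dsum2 big_distrr; apply: eq_bigr => x _; rewrite big_distrr.
by apply: eq_bigr => y _; rewrite mulnCA.
Qed.

Lemma dsum2_1 : dsum2 (fun _ _ => 1) = n * n.-1.
Proof.
rewrite /dsum2 (eq_bigr (fun _ => n.-1)) ?sum_nat_const // => x _.
by rewrite -(sum_neq x); apply: eq_bigr => y _; rewrite muln1.
Qed.

Lemma dsum2_eq_fst k : dsum2 (fun x _ => x == k) = n.-1.
Proof.
rewrite /dsum2 -(sum_neq k) -(sum_delta k (fun x => \sum_y (x != y : nat))).
by apply: eq_bigr => x _; rewrite big_distrr; apply: eq_bigr => y _; rewrite mulnC.
Qed.

Lemma dsum2_eq_snd k : dsum2 (fun _ y => y == k) = n.-1.
Proof.
rewrite /dsum2 exchange_big -(sum_neq k) -(sum_delta k (fun y => \sum_x (k != x : nat))).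
apply: eq_bigr => y _; rewrite big_distrr; apply: eq_bigr => x _.
by case: (y =P k) => [->|_]; rewrite ?muln0 ?mul0n //= eq_sym; lia.
Qed.

Lemma dsum2_eq_both k l : k != l -> dsum2 (fun x y => (x == k) * (y == l)) = 1.
Proof.
move=> kl; rewrite /dsum2 (eq_bigr (fun x => (x == k) * \sum_y (y == l) * (x != y))).
  by rewrite sum_delta sum_delta kl.
move=> x _; rewrite big_distrr; apply: eq_bigr => y _ /=; ring.
Qed.

Lemma eq_dsum3 F G : (forall x y z, [&& x != y, x != z & y != z] -> F x y z = G x y z) ->
  dsum3 F = dsum3 G.
Proof.
move=> FG; apply: eq_bigr => x _; apply: eq_bigr => y _; apply: eq_bigr => z _.
case: (boolP [&& x != y, x != z & y != z]) => [/FG-> //|].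
by case: (x != y); case: (x != z); case: (y != z).
Qed.

Lemma dsum3D F G : dsum3 (fun x y z => F x y z + G x y z) = dsum3 F + dsum3 G.
Proof.
rewrite /dsum3 -big_split; apply: eq_bigr => x _; rewrite -big_split.
apply: eq_bigr => y _; rewrite -big_split.
by apply: eq_bigr => z _; rewrite mulnDr.
Qed.

Lemma dsum3Ml k F : dsum3 (fun x y z => k * F x y z) = k * dsum3 F.
Proof.
rewrite /dsum3 big_distrr; apply: eq_bigr => x _; rewrite big_distrr.
apply: eq_bigr => y _; rewrite big_distrr.
by apply: eq_bigr => z _; rewrite mulnCA.
Qed.

Lemma dsum3_dsum2 G : dsum3 (fun x y _ => G x y) = n.-2 * dsum2 G.
Proof.
rewrite -dsum2Ml; apply: eq_bigr => x _; apply: eq_bigr => y _.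
rewrite -big_distrl /= -big_distrr /=.
case: (boolP (x != y)) => xy; last by rewrite !mul0n.
by rewrite sum_neq2 // mul1n mulnCA mul1n.
Qed.

Lemma dsum3_1 : dsum3 (fun _ _ _ => 1) = n * n.-1 * n.-2.
Proof. by rewrite (dsum3_dsum2 (fun _ _ => 1)) dsum2_1 mulnC. Qed.

Lemma dsum3_eq_fst k : dsum3 (fun x _ _ => x == k) = n.-1 * n.-2.
Proof. by rewrite (dsum3_dsum2 (fun x _ => x == k)) dsum2_eq_fst mulnC. Qed.

Lemma dsum3_eq_snd k : dsum3 (fun _ y _ => y == k) = n.-1 * n.-2.
Proof. by rewrite (dsum3_dsum2 (fun _ y => y == k)) dsum2_eq_snd mulnC. Qed.

Lemma dsum3_eq_fst_snd k l : k != l ->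
  dsum3 (fun x y _ => (x == k) * (y == l)) = n.-2.
Proof.
by move=> kl; rewrite (dsum3_dsum2 (fun x y => (x == k) * (y == l))) dsum2_eq_both ?muln1.
Qed.

Lemma dsum3_eq_all k l m : [&& k != l, k != m & l != m] ->
  dsum3 (fun x y z => (x == k) * ((y == l) * (z == m))) = 1.
Proof.
move=> /and3P[kl km lm].
rewrite /dsum3 (eq_bigr (fun x => (x == k) * \sum_y (y == l) * \sum_z (z == m) *
                   ((x != y) * ((x != z) * (y != z))))).
  by rewrite !sum_delta kl km lm.
move=> x _; rewrite big_distrr; apply: eq_bigr => y _.
rewrite !big_distrr; apply: eq_bigr => z _ /=; ring.
Qed.

End DistinctTuples.

(* Decides a statement about equalities between variables by splitting on each
   such equality; the hypotheses must first be moved into the goal. *)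
Ltac case_eqs :=
  repeat (rewrite ?eqxx /=; try solve [intros; congruence];
          match goal with |- context [?x == ?y] =>
            is_var x; is_var y; case: (x =P y) => [?|?]; [try subst|] end);
  rewrite ?eqxx /=; try congruence; try done; try lia.

Section SubKautz.

Variable d : nat.
Local Notation vert := (sK2_vert d).
Local Notation arc := (@sK2_arc d).
Hypothesis d_ge3 : 3 <= d.

(* Distance from [ab] to [ce], read off the walks [ab -> be] and
   [ab -> bc -> ce]; reaching [ba] takes four arcs. *)
Definition sK2_distance (a b c e : 'I_d.+1) : nat :=
  if (c == a) && (e == b) then 0 else if c == b then (if e == a then 4 else 1)
  else if (c == a) || (e == b) then 3 else 2.

Lemma sK2_distance_le4 a b c e : sK2_distance a b c e <= 4.
Proof. by rewrite /sK2_distance; repeat case: ifP. Qed.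

Lemma sK2_distance_eq0 a b c e : sK2_distance a b c e = 0 -> c = a /\ e = b.
Proof. by rewrite /sK2_distance; case: ifP => [/andP[/eqP-> /eqP->]|] //; repeat case: ifP. Qed.

Lemma sK2_distance_shift a b z c e : z != a -> z != b -> c != e ->
  sK2_distance a b c e <= (sK2_distance b z c e).+1.
Proof. rewrite /sK2_distance; case_eqs. Qed.

Lemma sK2_distance_descent a b c e k : a != b -> c != e ->
  sK2_distance a b c e = k.+1 ->
  exists2 z, (z != a) && (z != b) & sK2_distance b z c e = k.
Proof.
move=> ab ce; rewrite /sK2_distance => dk.
have card_gt3 : 3 < #|'I_d.+1| by rewrite card_ord.
have [z /and3P[za zb zce]] := fresh_of_3 a b (if c == a then e else c) card_gt3.
exists (if c == b then (if e == a then z else e)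
        else if (c == a) || (e == b) then z else c);
  move: ab ce za zb zce dk; case_eqs.
Qed.

Lemma sum_sK2 (F : 'I_d.+1 -> 'I_d.+1 -> nat) :
  \sum_(v : vert) F (val v).1 (val v).2 = dsum2 F.
Proof.
rewrite (sum_sig (fun p : 'I_d.+1 * 'I_d.+1 => p.1 != p.2) (fun p => F p.1 p.2)).
rewrite /dsum2 pair_big /= big_mkcond; apply: eq_bigr => -[c e] _ /=.
by case: (c != e); rewrite ?mul1n.
Qed.

Lemma card_sK2 : #|{: vert}| = d.+1 * d.
Proof.
by rewrite -sum1_card (sum_sK2 (fun _ _ => 1)) dsum2_1 card_ord.
Qed.

Lemma sum_sK2_distance a b : a != b ->
  \sum_(v : vert) sK2_distance a b (val v).1 (val v).2 = 2 * d ^ 2 + 3 * d - 1.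
Proof.
move=> ab; rewrite (sum_sK2 (sK2_distance a b)).
(* A pointwise identity on distinct pairs, with every coefficient moved to the
   side where it is nonnegative so that no truncated subtraction occurs. *)
have E : dsum2 (sK2_distance a b) + dsum2 (fun c _ => c == b)
           + 4 * dsum2 (fun c e => (c == a) * (e == b))
         = 2 * dsum2 (fun _ _ : 'I_d.+1 => 1) + dsum2 (fun c _ => c == a) + dsum2 (fun _ e => e == b)
           + 3 * dsum2 (fun c e => (c == b) * (e == a)).
  rewrite -!dsum2Ml -!dsum2D; apply: eq_dsum2 => c e ce.
  by rewrite /sK2_distance; move: ab ce; case_eqs.
have ba : b != a by rewrite eq_sym.
rewrite dsum2_1 !dsum2_eq_fst dsum2_eq_snd !dsum2_eq_both // !(card_ord d.+1) in E.
by rewrite -mulnn; lia.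
Qed.

Lemma dist_sK2 (u v : vert) :
  dist arc u v = sK2_distance (val u).1 (val u).2 (val v).1 (val v).2.
Proof.
case: v => -[c e] /= ce.
apply: (dist_potential (f := fun w : vert => sK2_distance (val w).1 (val w).2 c e)) => /=.
- by rewrite /sK2_distance !eqxx.
- move=> [[a b] ab] [[b' z] bz] /=; rewrite /sK2_arc /= => /andP[/andP[/eqP-> za] zb].
  exact: sK2_distance_shift.
- move=> [[a b] ab] /= /sK2_distance_eq0[ca eb]; subst.
  by congr exist; apply: bool_irrelevance.
- move=> [[a b] ab] k /= /(sK2_distance_descent ab ce)[z /andP[za zb] dk].
  have bz : (b, z).1 != (b, z).2 by rewrite /= eq_sym.
  by exists (exist _ (b, z) bz); rewrite //= /sK2_arc /= eqxx za zb.
- move=> w; apply: leq_ltn_trans (sK2_distance_le4 _ _ _ _) _.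
  by rewrite card_sK2; nia.
Qed.

Lemma sK2_rev_subproof (u : vert) : ((val u).2, (val u).1).1 != ((val u).2, (val u).1).2.
Proof. by rewrite /= eq_sym (valP u). Qed.

Definition sK2_rev (u : vert) : vert := exist _ ((val u).2, (val u).1) (sK2_rev_subproof u).

Lemma sK2_distance_eq4 (u v : vert) :
  (sK2_distance (val u).1 (val u).2 (val v).1 (val v).2 == 4) = (v == sK2_rev u).
Proof.
case: u v => -[a b] ab [[c e] ce]; rewrite -val_eqE /= xpair_eqE /sK2_distance.
by move: ab ce; case_eqs.
Qed.

Lemma diameter_sK2 : diameter arc = 4.
Proof.
apply/eqP; rewrite eqn_leq; apply/andP; split.
  by apply/bigmax_leqP => u _; apply/bigmax_leqP => v _; rewrite dist_sK2 sK2_distance_le4.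
have ab : (ord0 : 'I_d.+1) != ord_max by rewrite -val_eqE /=; lia.
pose u : vert := exist _ (ord0, ord_max) ab.
apply: leq_trans (leq_bigmax u); apply: leq_trans (leq_bigmax (sK2_rev u)).
by move: (sK2_distance_eq4 u (sK2_rev u)); rewrite eqxx dist_sK2 => /eqP->.
Qed.

Lemma antipodal_sK2 : antipodal arc.
Proof.
move=> u; rewrite diameter_sK2; split.
  suff -> : [set v | dist arc u v == 4] = [set sK2_rev u] by rewrite cards1.
  by apply/setP => v; rewrite !inE dist_sK2 sK2_distance_eq4.
move=> v /eqP; rewrite dist_sK2 sK2_distance_eq4 => /eqP->.
by case: u => -[a b] ab; rewrite dist_sK2 /sK2_distance /= (negbTE ab) !eqxx.
Qed.

Lemma mean_distance_sK2 :
  mean_distance arc = ((2 * d ^ 2 + 3 * d - 1)%N%:R / (d ^ 2 + d)%N%:R)%R.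
Proof.
have card : #|{: vert}| = d ^ 2 + d by rewrite card_sK2 -mulnn mulSn addnC.
apply: (mean_distance_row_sum _ card); last by lia.
move=> u; rewrite (eq_bigr _ (fun v _ => dist_sK2 u v)).
exact: sum_sK2_distance (valP u).
Qed.

End SubKautz.

Section CyclicKautz.

Variable d : nat.
Local Notation vert := (CK3_vert d).
Local Notation arc := (@CK3_arc d).
Hypothesis d_ge3 : 3 <= d.

(* Distance from [abc] to [xyz], read off the walks [abc -> bcz],
   [abc -> bcy -> cyz] and [abc -> bcx -> cxy -> xyz]. *)
Definition CK3_distance (a b c x y z : 'I_d.+1) : nat :=
  if [&& x == a, y == b & z == c] then 0 else if (x == b) && (y == c) then 1
  else if x == c then (if y == b then 5 else 2)
  else if (x == b) || (y == c) then 4 else 3.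

Lemma CK3_distance_le5 a b c x y z : CK3_distance a b c x y z <= 5.
Proof. by rewrite /CK3_distance; repeat case: ifP. Qed.

Lemma CK3_distance_eq0 a b c x y z :
  CK3_distance a b c x y z = 0 -> [/\ x = a, y = b & z = c].
Proof.
rewrite /CK3_distance; case: ifP => [/and3P[/eqP-> /eqP-> /eqP->] //|].
by repeat case: ifP.
Qed.

Lemma CK3_distance_shift a b c w x y z :
  [&& a != b, a != c & b != c] -> w != b -> w != c -> [&& x != y, x != z & y != z] ->
  CK3_distance a b c x y z <= (CK3_distance b c w x y z).+1.
Proof. rewrite /CK3_distance; case_eqs. Qed.

Lemma CK3_distance_descent a b c x y z k :
  [&& a != b, a != c & b != c] -> [&& x != y, x != z & y != z] ->
  CK3_distance a b c x y z = k.+1 ->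
  exists2 w, (w != b) && (w != c) & CK3_distance b c w x y z = k.
Proof.
move=> abc xyz; rewrite /CK3_distance => dk.
have card_gt3 : 3 < #|'I_d.+1| by rewrite card_ord.
have [w /and3P[wb wc wxy]] := fresh_of_3 b c (if x == b then y else x) card_gt3.
exists (if (x == b) && (y == c) then z else if x == c then (if y == b then a else y)
        else if (x == b) || (y == c) then w else x);
  move: abc xyz wb wc wxy dk; case_eqs.
Qed.

Lemma sum_CK3 (F : 'I_d.+1 -> 'I_d.+1 -> 'I_d.+1 -> nat) :
  \sum_(v : vert) F (val v).1.1 (val v).1.2 (val v).2 = dsum3 F.
Proof.
rewrite (sum_sig (fun p : 'I_d.+1 * 'I_d.+1 * 'I_d.+1 =>
   [&& p.1.1 != p.1.2, p.1.1 != p.2 & p.1.2 != p.2]) (fun p => F p.1.1 p.1.2 p.2)).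
rewrite /dsum3 pair_big pair_big /= big_mkcond; apply: eq_bigr => -[[x y] z] _ /=.
by case: (x != y); case: (x != z); case: (y != z); rewrite ?mul1n.
Qed.

Lemma card_CK3 : #|{: vert}| = d.+1 * d * d.-1.
Proof. by rewrite -sum1_card (sum_CK3 (fun _ _ _ => 1)) dsum3_1 (card_ord d.+1). Qed.

Lemma sum_CK3_distance a b c : [&& a != b, a != c & b != c] ->
  \sum_(v : vert) CK3_distance a b c (val v).1.1 (val v).1.2 (val v).2
    = 3 * d ^ 3 + d ^ 2 - 5 * d - 2.
Proof.
move=> abc; rewrite (sum_CK3 (CK3_distance a b c)).
have E : dsum3 (CK3_distance a b c) + 4 * dsum3 (fun x y _ => (x == b) * (y == c))
           + dsum3 (fun x _ _ => x == c)
           + 3 * dsum3 (fun x y z => (x == a) * ((y == b) * (z == c)))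
         = 3 * dsum3 (fun _ _ _ : 'I_d.+1 => 1) + dsum3 (fun x _ _ => x == b)
           + dsum3 (fun _ y _ => y == c) + 3 * dsum3 (fun x y _ => (x == c) * (y == b)).
  rewrite -!dsum3Ml -!dsum3D; apply: eq_dsum3 => x y z xyz.
  by rewrite /CK3_distance; move: abc xyz; case_eqs.
have [bc cb] : b != c /\ c != b by case/and3P: abc => _ _ bc; rewrite bc eq_sym bc.
rewrite dsum3_1 !dsum3_eq_fst dsum3_eq_snd !dsum3_eq_fst_snd // dsum3_eq_all //
  !(card_ord d.+1) in E.
move: (dsum3 _) E => S E; clear -E.
by case: d E => [|n] /= E; rewrite !expnS expn0 !muln1; nia.
Qed.

Lemma dist_CK3 (u v : vert) :
  dist arc u v = CK3_distance (val u).1.1 (val u).1.2 (val u).2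
                              (val v).1.1 (val v).1.2 (val v).2.
Proof.
case: v => -[[x y] z] /= xyz.
apply: (dist_potential (f := fun w : vert =>
          CK3_distance (val w).1.1 (val w).1.2 (val w).2 x y z)) => /=.
- by rewrite /CK3_distance !eqxx.
- move=> [[[a b] c] abc] [[[b' c'] w] bcw] /=.
  rewrite /CK3_arc /= => /and4P[/eqP-> /eqP-> wb wc].
  exact: CK3_distance_shift.
- move=> [[[a b] c] abc] /= /CK3_distance_eq0[xa yb zc]; subst.
  by congr exist; apply: bool_irrelevance.
- move=> [[[a b] c] abc] k /= /(CK3_distance_descent abc xyz)[w /andP[wb wc] dk].
  have bcw : [&& ((b, c), w).1.1 != ((b, c), w).1.2, ((b, c), w).1.1 != ((b, c), w).2
               & ((b, c), w).1.2 != ((b, c), w).2].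
    by case/and3P: abc => _ _ bc; rewrite /= bc eq_sym wb eq_sym wc.
  by exists (exist _ ((b, c), w) bcw); rewrite //= /CK3_arc /= !eqxx wb wc.
- move=> w; apply: leq_ltn_trans (CK3_distance_le5 _ _ _ _ _ _) _.
  by rewrite card_CK3; case: d d_ge3 => // n n_ge2 /=; nia.
Qed.

Lemma mean_distance_CK3 :
  mean_distance arc = ((3 * d ^ 3 + d ^ 2 - 5 * d - 2)%N%:R / (d ^ 3 - d)%N%:R)%R.
Proof.
have card : #|{: vert}| = d ^ 3 - d.
  by rewrite card_CK3; case: d d_ge3 => // n _; rewrite !expnS expn0 !muln1 /=; nia.
apply: (mean_distance_row_sum _ card); last by rewrite -card card_CK3; case: d d_ge3 => // n; nia.
move=> u; rewrite (eq_bigr _ (fun v _ => dist_CK3 u v)).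
exact: sum_CK3_distance (valP u).
Qed.

End CyclicKautz.

Local Open Scope ring_scope.

Theorem mainTheorem15 (d : nat) (hd : (3 <= d)%N) :
  (antipodal (@sK2_arc d) /\
   mean_distance (@sK2_arc d) =
     (2 * d ^ 2 + 3 * d - 1)%N%:R / (d ^ 2 + d)%N%:R) /\
  mean_distance (@CK3_arc d) =
     (3 * d ^ 3 + d ^ 2 - 5 * d - 2)%N%:R / (d ^ 3 - d)%N%:R.
Proof.
split; first split.
- exact: antipodal_sK2 hd.
- exact: mean_distance_sK2 hd.
- exact: mean_distance_CK3 hd.
Qed.
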